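(* Let $\alpha$ be a complex number with $0<|\alpha|<1$ and let $\alpha_n=\alpha$ for all $n\ge0$ (Geronimus polynomials). Then, for every nonnegative integer $m$, as formal power series in $z$, \[ \sum_{n\ge0}\mu_{n,m}z^n=\frac{2|\alpha|^2(2z)^m}{\left(2|\alpha|^2+\alpha-\alpha z-\alpha\sqrt{1-2z+4|\alpha|^2z+z^2}\right)\left(1+z+\sqrt{1-2z+4|\alpha|^2z+z^2}\right)^m}, \] where the square root is the formal power series with constant term $1$.
   Context: For a polynomial $f(z)=\sum_{k=0}^n a_kz^k$ of degree $n$, write $\overline{f}(z)=\sum_k\overline{a_k}z^k$ and $f^*(z)=z^n\overline{f}(1/z)$. Given $(\alpha_n)$ with $|\alpha_n|<1$, define monic $\Phi_n$ by $\Phi_0=1$, $\Phi_{n+1}(z)=z\Phi_n(z)-\overline{\alpha_n}\Phi_n^*(z)$. Let $\mathcal{L}$ be the unique linear functional on Laurent polynomials with $\mathcal{L}(1)=1$ and $\mathcal{L}(\Phi_m(z)\overline{\Phi_n}(1/z))=0$ for $m\neq n$; set $\langle f,g\rangle=\mathcal{L}(f(z)\overline{g}(1/z))$ and $\mu_{n,m}=\langle\Phi_m(z),z^n\rangle/\langle\Phi_m,\Phi_m\rangle$. *)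

From HB Require Import structures.
From mathcomp Require Import all_boot all_order all_algebra.
From mathcomp Require Import complex.
From mathcomp Require Import reals.
Set Implicit Arguments. Unset Strict Implicit. Unset Printing Implicit Defensive.
Import Order.TTheory GRing.Theory Num.Theory.
Local Open Scope ring_scope.

Section OPUC.
Variable C : numClosedFieldType.

(* f^*(z) = z^n \bar f(1/z) for a polynomial of degree n:
   coefficient i of f^* is conj(f_(n-i)). *)
Definition pstar (n : nat) (f : {poly C}) : {poly C} :=
  \poly_(i < n.+1) (f`_(n - i))^*.

Fixpoint Phi (alpha : nat -> C) (n : nat) : {poly C} :=
  match n with
  | 0 => 1
  | n'.+1 => 'X * Phi alpha n' - (alpha n')^* *: pstar n' (Phi alpha n')
  end.

(* A linear functional L on Laurent polynomials is given by its moments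
   c k = L(z^k), k : int.  Then <f,g> = L(f(z) \bar g(1/z))
   = sum_{i,j} f_i conj(g_j) c(i - j). *)
Definition lip (c : int -> C) (f g : {poly C}) : C :=
  \sum_(i < size f) \sum_(j < size g) f`_i * (g`_j)^* * c (i%:Z - j%:Z).

Definition is_OPUC_functional (alpha : nat -> C) (c : int -> C) : Prop :=
  c 0 = 1 /\ forall m n : nat, m <> n -> lip c (Phi alpha m) (Phi alpha n) = 0.

Definition mu (alpha : nat -> C) (c : int -> C) (n m : nat) : C :=
  lip c (Phi alpha m) 'X^n / lip c (Phi alpha m) (Phi alpha m).

Definition fps := nat -> C.
Definition fps_const (a : C) : fps := fun n => if n is 0 then a else 0.
Definition fps_X : fps := fun n => if n == 1%N then 1 else 0.
Definition fps_add (f g : fps) : fps := fun n => f n + g n.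
Definition fps_opp (f : fps) : fps := fun n => - f n.
Definition fps_scale (a : C) (f : fps) : fps := fun n => a * f n.
Definition fps_mul (f g : fps) : fps :=
  fun n => \sum_(i < n.+1) f i * g (n - i)%N.
Fixpoint fps_exp (f : fps) (k : nat) : fps :=
  match k with 0 => fps_const 1 | k'.+1 => fps_mul f (fps_exp f k') end.

End OPUC.

From HB Require Import structures.
From mathcomp Require Import all_boot all_order all_algebra.
From mathcomp Require Import complex.
From mathcomp Require Import reals.
From mathcomp Require Import boolp ring zify.
Import Order.TTheory GRing.Theory Num.Theory.
Local Open Scope ring_scope.
Set Implicit Arguments. Unset Strict Implicit. Unset Printing Implicit Defensive.

(* For U_m = sum_n <Phi_m, z^n> z^n and W_m = sum_(n >= 1) <Phi_m^*, z^n> z^n, the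
   Szego recursion reads (U, W)_(m+1) = [[z, -conj a], [-a z, 1]] (U, W)_m, and
   orthogonality says that U_m and W_m are O(z^m).  The transfer matrix has the
   eigenvalues (1 + z +- S)/2, whose product is (1 - |a|^2) z.  The component of
   (U, W)_m along the eigenvalue (1 + z + S)/2, a unit, is multiplied by that unit
   at each step while being O(z^m), so it vanishes.  Hence (U, W)_m lies on the
   other eigenline: (1 + z + S) U_(m+1) = 2 (1 - |a|^2) z U_m, and at m = 0 the
   same relation, with W_0 = U_0 - 1, gives D1 U_0 = 2 |a|^2.  Dividing by the
   leading coefficient <Phi_m, z^m> = (1 - |a|^2)^m gives the formula. *)

Lemma coefM_take_poly (R : nzRingType) (p q : {poly R}) N n : (n < N)%N ->
  (p * take_poly N q)`_n = (p * q)`_n.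
Proof.
move=> ltnN; rewrite -[in RHS](poly_take_drop N q) mulrDr coefD mulrA coefMXn.
by rewrite ltnN addr0.
Qed.

Section FormalPowerSeries.
Variable C : numClosedFieldType.
Implicit Types (f g h : fps C) (x y : C).

HB.instance Definition _ := gen_eqMixin (fps C).
HB.instance Definition _ := gen_choiceMixin (fps C).

Definition fps_trunc (N : nat) f : {poly C} := \poly_(i < N) f i.

Lemma fps_mul_trunc f g N n : (n < N)%N ->
  fps_mul f g n = (fps_trunc N f * fps_trunc N g)`_n.
Proof.
move=> ltnN; rewrite coefM; apply: eq_bigr => i _.
by rewrite !coef_poly !(leq_ltn_trans _ ltnN) ?leq_subr // -ltnS.
Qed.

Lemma fps_trunc_mul f g N :
  fps_trunc N (fps_mul f g) = take_poly N (fps_trunc N f * fps_trunc N g).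
Proof.
apply/polyP => i; rewrite coef_poly coef_take_poly.
by case: ifP => // /fps_mul_trunc ->.
Qed.

Lemma fps_addA : associative (@fps_add C).
Proof. by move=> f g h; apply/funext => n; rewrite /fps_add addrA. Qed.
Lemma fps_addC : commutative (@fps_add C).
Proof. by move=> f g; apply/funext => n; rewrite /fps_add addrC. Qed.
Lemma fps_add0 : left_id (fps_const 0) (@fps_add C).
Proof. by move=> f; apply/funext => -[|n]; rewrite /fps_add add0r. Qed.
Lemma fps_addN : left_inverse (fps_const 0) (@fps_opp C) (@fps_add C).
Proof. by move=> f; apply/funext => -[|n]; rewrite /fps_add /fps_opp addNr. Qed.

HB.instance Definition _ :=
  GRing.isZmodule.Build (fps C) fps_addA fps_addC fps_add0 fps_addN.

Lemma fps_mulC : commutative (@fps_mul C).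
Proof.
by move=> f g; apply/funext => n; rewrite !(fps_mul_trunc _ _ (ltnSn n)) mulrC.
Qed.

Lemma fps_mulA : associative (@fps_mul C).
Proof.
move=> f g h; apply/funext => n; rewrite !(fps_mul_trunc _ _ (ltnSn n)).
rewrite !fps_trunc_mul coefM_take_poly // [in RHS]mulrC coefM_take_poly //.
by rewrite mulrA [in RHS]mulrC.
Qed.

Lemma fps_mul1 : left_id (fps_const 1) (@fps_mul C).
Proof.
move=> f; apply/funext => n.
by rewrite /fps_mul big_ord_recl mul1r subn0 big1 ?addr0 // => i _; rewrite mul0r.
Qed.

Lemma fps_mulDl : left_distributive (@fps_mul C) (@fps_add C).
Proof.
move=> f g h; apply/funext => n.
by rewrite /fps_mul /fps_add -big_split; apply: eq_bigr => i _; rewrite mulrDl.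
Qed.

Lemma fps_one_neq0 : fps_const (1 : C) != fps_const 0.
Proof. by apply/eqP => /(congr1 (fun f => f 0%N)) /eqP; rewrite oner_eq0. Qed.

HB.instance Definition _ := GRing.Zmodule_isComNzRing.Build (fps C)
  fps_mulA fps_mulC fps_mul1 fps_mulDl fps_one_neq0.

Lemma coef_fps0 n : (0 : fps C) n = 0. Proof. by case: n. Qed.
Lemma coef_fpsD f g n : (f + g) n = f n + g n. Proof. by []. Qed.
Lemma coef_fpsB f g n : (f - g) n = f n - g n. Proof. by []. Qed.
Lemma coef_fpsM f g n : (f * g) n = \sum_(i < n.+1) f i * g (n - i)%N.
Proof. by []. Qed.
Lemma coef_fps_X n : fps_X C n = (n == 1%N)%:R.
Proof. by rewrite /fps_X; case: eqP. Qed.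

Lemma fps_constB : {morph @fps_const C : x y / x - y}.
Proof. by move=> x y; apply/funext => -[|n]; rewrite coef_fpsB /= ?subr0. Qed.

Lemma coef_fps_constM x f n : (fps_const x * f) n = x * f n.
Proof.
by rewrite coef_fpsM big_ord_recl subn0 big1 ?addr0 // => i _; rewrite mul0r.
Qed.

Lemma fps_constM : {morph @fps_const C : x y / x * y}.
Proof.
by move=> x y; apply/funext => -[|n]; rewrite coef_fps_constM /= ?mulr0.
Qed.

(* As a ring morphism, [fps_const] is pushed through sums and products by [ring]. *)
HB.instance Definition _ :=
  GRing.isZmodMorphism.Build C (fps C) (@fps_const C) fps_constB.
HB.instance Definition _ :=
  GRing.isMonoidMorphism.Build C (fps C) (@fps_const C) (erefl, fps_constM).

Lemma coef_fpsXM f n : (fps_X C * f) n = if n is n'.+1 then f n' else 0.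
Proof.
rewrite coef_fpsM; case: n => [|n]; first by rewrite big_ord1 mul0r.
rewrite big_ord_recl mul0r add0r big_ord_recl subSS subn0 mul1r big1 ?addr0 //.
by move=> i _; rewrite coef_fps_X mul0r.
Qed.

Lemma coef_fpsM0 f g : (f * g) 0%N = f 0%N * g 0%N.
Proof. by rewrite coef_fpsM big_ord1. Qed.

Lemma coef_fpsX0 f k : (f ^+ k) 0%N = f 0%N ^+ k.
Proof. by elim: k => // k IHk; rewrite !exprS coef_fpsM0 IHk. Qed.

Lemma coef_fpsXn k n : (fps_X C ^+ k) n = (n == k)%:R.
Proof.
by elim: k n => [|k IHk] [|n] //; rewrite exprS coef_fpsXM // IHk eqSS.
Qed.

Lemma fps_addE f g : fps_add f g = f + g. Proof. by []. Qed.
Lemma fps_mulE f g : fps_mul f g = f * g. Proof. by []. Qed.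
Lemma fps_scaleE x f : fps_scale x f = fps_const x * f.
Proof. by apply/funext => n; rewrite coef_fps_constM. Qed.
Lemma fps_expE f k : fps_exp f k = f ^+ k.
Proof. by elim: k => // k IHk; rewrite exprS /= fps_mulE IHk. Qed.

Lemma coef_fps_quadratic p n :
  (1 + fps_const p * fps_X C + fps_X C * fps_X C) n =
  match n with 0 => 1 | 1 => p | 2 => 1 | _ => 0 end.
Proof.
by rewrite !coef_fpsD coef_fps_constM !coef_fpsXM; case: n => [|[|[|n]]];
  rewrite ?coef_fps_X /= ?mulr0 ?mulr1 ?addr0 ?add0r.
Qed.

Definition vanishes_below f k := forall i, (i < k)%N -> f i = 0.

Lemma vanishes_belowD f g k :
  vanishes_below f k -> vanishes_below g k -> vanishes_below (f + g) k.
Proof. by move=> f0 g0 i ltik; rewrite coef_fpsD f0 ?g0 ?addr0. Qed.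

Lemma vanishes_belowMl f g k : vanishes_below f k -> vanishes_below (g * f) k.
Proof.
move=> f0 i ltik; rewrite coef_fpsM big1 // => j _.
by rewrite f0 ?mulr0 // (leq_ltn_trans (leq_subr _ _) ltik).
Qed.

Lemma coef_fpsM_vanishes f g k : vanishes_below f k -> (f * g) k = f k * g 0%N.
Proof.
move=> f0; rewrite coef_fpsM big_ord_recr /= subnn big1 ?add0r // => i _.
by rewrite f0 ?mul0r.
Qed.

Lemma vanishes_below_cancel f g k :
  g 0%N != 0 -> vanishes_below (g * f) k -> vanishes_below f k.
Proof.
move=> g0_neq0; elim: k => [|k IHk] gf0 i //; rewrite ltnS leq_eqVlt.
have f0 : vanishes_below f k by apply: IHk => j /ltnW; apply: gf0.
case/predU1P => [->|]; last exact: f0.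
have /eqP := gf0 k (ltnSn k); rewrite mulrC coef_fpsM_vanishes // mulf_eq0.
by rewrite (negPf g0_neq0) orbF => /eqP.
Qed.

Lemma fps_eq0 f : (forall k, vanishes_below f k) -> f = 0.
Proof. by move=> f0; apply/funext => n; rewrite coef_fps0; apply: (f0 n.+1). Qed.

Lemma fps_lreg g : g 0%N != 0 -> GRing.lreg g.
Proof.
move=> g0_neq0 f1 f2 eq_gf; apply/eqP; rewrite -subr_eq0; apply/eqP.
apply: fps_eq0 => k; apply: (vanishes_below_cancel g0_neq0).
by rewrite mulrBr eq_gf subrr => i _; rewrite coef_fps0.
Qed.

Lemma two_neq0 : (2 : C) != 0.
Proof. by rewrite pnatr_eq0. Qed.

Lemma fps_two_lreg : GRing.lreg (2 : fps C).
Proof. by apply: fps_lreg; rewrite two_neq0. Qed.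

End FormalPowerSeries.

Section GeronimusRecurrence.
Variables (C : numClosedFieldType) (a b : C) (S : fps C) (U W : nat -> fps C).
Local Notation z := (fps_X C).

Hypothesis S0 : S 0%N = 1.
Hypothesis S2 : S * S = 1 + fps_const (-2 + 4 * (a * b)) * z + z * z.
Hypothesis U_rec : forall m, U m.+1 = z * U m - fps_const b * W m.
Hypothesis W_rec : forall m, W m.+1 = W m - fps_const a * z * U m.
Hypothesis U_vanishes : forall m, vanishes_below (U m) m.
Hypothesis W_vanishes : forall m, vanishes_below (W m) m.
Hypothesis W0 : W 0%N = U 0%N - 1.

Let D1 := fps_const (2 * (a * b) + a) + (fps_const (- a) * z + fps_const (- a) * S).
Let D2 := fps_const 1 + (z + S).
(* T = 2 (1 - l) for the unit eigenvalue l = D2 / 2 of the transfer matrix;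
   (T, 2 b) is a left eigenvector for l. *)
Let T := 1 - z - S.

Lemma D2_coef0 : D2 0%N = 2.
Proof. by rewrite /D2 !coef_fpsD S0 coef_fps_X add0r. Qed.

Lemma dominant_component_eq0 m : T * U m + 2 * fps_const b * W m = 0.
Proof.
pose Q m := T * U m + 2 * fps_const b * W m.
have Q_rec n : 2 * Q n.+1 = D2 * Q n by rewrite /Q U_rec W_rec /T /D2; ring: S2.
have Q_pow n : 2 ^+ n * Q n = D2 ^+ n * Q 0%N.
  by elim: n => // n IHn; rewrite exprS -mulrA mulrCA Q_rec mulrCA IHn exprS mulrA.
have two_pow0 n : (2 ^+ n : fps C) 0%N != 0 by rewrite coef_fpsX0 expf_neq0 ?two_neq0.
have Q_vanishes n : vanishes_below (Q n) n.
  by apply: vanishes_belowD; apply: vanishes_belowMl.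
have Q0 : Q 0%N = 0.
  apply: fps_eq0 => k; apply: (vanishes_below_cancel (g := D2 ^+ k)).
    by rewrite coef_fpsX0 D2_coef0 expf_neq0 ?two_neq0.
  by rewrite -Q_pow; apply: vanishes_belowMl.
by apply: (fps_lreg (two_pow0 m)); rewrite -/(Q m) Q_pow Q0 !mulr0.
Qed.

Lemma D2_mul_U_succ m : D2 * U m.+1 = fps_const (2 * (1 - a * b)) * z * U m.
Proof.
apply: fps_two_lreg => /=.
rewrite -[RHS]subr0 -(mulr0 D2) -(dominant_component_eq0 m) U_rec /D2 /T.
ring: S2.
Qed.

Lemma D1_mul_U0 : D1 * U 0%N = fps_const (2 * (a * b)).
Proof.
rewrite -[RHS]addr0 -(mulr0 (fps_const a)) -(dominant_component_eq0 0) W0.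
by rewrite /D1 /T; ring.
Qed.

Lemma U_closed_form m :
  U m * (D1 * D2 ^+ m) = fps_const (2 * (a * b) * (2 * (1 - a * b)) ^+ m) * z ^+ m.
Proof.
elim: m => [|m IHm]; first by rewrite !expr0 !mulr1 mulrC D1_mul_U0.
transitivity (fps_const (2 * (1 - a * b)) * z * (U m * (D1 * D2 ^+ m))).
  by rewrite exprS; ring: (D2_mul_U_succ m).
by rewrite IHm !exprS; ring.
Qed.

Lemma U_coef_diag m : a * b != 0 -> U m m = (1 - a * b) ^+ m.
Proof.
move=> ab_neq0; have := congr1 (fun f => f m) (U_closed_form m).
rewrite coef_fpsM_vanishes // coef_fps_constM coef_fpsXn eqxx mulr1.
rewrite coef_fpsM0 coef_fpsX0 D2_coef0 /D1 !coef_fpsD !coef_fps_constM S0 coef_fps_X.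
have two_ab_neq0 : 2 * (a * b) != 0 by rewrite mulf_neq0 ?two_neq0.
have two_exp_neq0 : 2 ^+ m != 0 :> C by rewrite expf_neq0 ?two_neq0.
rewrite mulr0 add0r mulr1 addrK exprMn mulrCA [2 ^+ m * _]mulrC.
by move=> /(mulfI two_ab_neq0) /(mulIf two_exp_neq0).
Qed.

Lemma U_normalized_closed_form m : a * b != 0 -> 1 - a * b != 0 ->
  fps_const (U m m)^-1 * U m * D1 * D2 ^+ m = fps_const (2 * (a * b)) * (fps_const 2 * z) ^+ m.
Proof.
move=> ab_neq0 rho_neq0; rewrite -!mulrA U_closed_form U_coef_diag // mulrA -fps_constM.
have -> : (1 - a * b) ^- m * (2 * (a * b) * (2 * (1 - a * b)) ^+ m) = 2 * (a * b) * 2 ^+ m.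
  by rewrite exprMn; field; rewrite expf_neq0.
by rewrite fps_constM (rmorphXn (@fps_const C)) exprMn -[LHS]mulrA.
Qed.

End GeronimusRecurrence.

Section Reversal.
Variable C : numClosedFieldType.
Implicit Types (f g : {poly C}) (k : C).

Lemma coef_pstar n f i : (pstar n f)`_i = if (i < n.+1)%N then (f`_(n - i))^* else 0.
Proof. exact: coef_poly. Qed.

Lemma pstarB n f g : pstar n (f - g) = pstar n f - pstar n g.
Proof.
by apply/polyP => i; rewrite coefB !coef_pstar coefB rmorphB; case: ifP; rewrite ?subr0.
Qed.

Lemma pstarZ n k f : pstar n (k *: f) = k^* *: pstar n f.
Proof.
by apply/polyP => i; rewrite coefZ !coef_pstar coefZ rmorphM; case: ifP; rewrite ?mulr0.
Qed.

Lemma pstar_mulX n f : pstar n.+1 ('X * f) = pstar n f.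
Proof.
apply/polyP => i; rewrite !coef_pstar coefXM.
case: (ltngtP i n.+1) => [ltin|ltni|->]; last by rewrite subnn ltnSn rmorph0.
- by rewrite ltnS (ltnW ltin) (@subSn i n ltin).
- by rewrite ltnNge ltni.
Qed.

Lemma pstarK_mulX n f : (size f <= n.+1)%N -> pstar n.+1 (pstar n f) = 'X * f.
Proof.
move=> size_f; apply/polyP => i; rewrite coefXM !coef_pstar.
case: i => [|i]; first by rewrite subn0 ltnn rmorph0.
rewrite !ltnS subSS; have [lein|ltni] := leqP i n.
  by rewrite leq_subr subKn // conjCK.
by rewrite nth_default // (leq_trans size_f).
Qed.

End Reversal.

Section Szego.
Variables (C : numClosedFieldType) (alpha : nat -> C).

Lemma size_Phi m : size (Phi alpha m) = m.+1.
Proof.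
elim: m => [|m IHm]; first by rewrite size_poly1.
have size_XPhi : size ('X * Phi alpha m) = m.+2.
  by rewrite mulrC size_mulX ?IHm // -size_poly_eq0 IHm.
rewrite /= size_polyDl size_XPhi // size_polyN ltnS.
exact: leq_trans (size_scale_leq _ _) (size_poly _ _).
Qed.

Lemma lead_coef_Phi m : lead_coef (Phi alpha m) = 1.
Proof.
elim: m => [|m IHm]; first exact: lead_coef1.
rewrite /= lead_coefDl; first by rewrite mulrC lead_coefMX.
rewrite size_polyN mulrC size_mulX -?size_poly_eq0 size_Phi // ltnS.
exact: leq_trans (size_scale_leq _ _) (size_poly _ _).
Qed.

Lemma coef_Phi_deg m : (Phi alpha m)`_m = 1.
Proof. by rewrite -(lead_coef_Phi m) lead_coefE size_Phi. Qed.

Lemma pstar_Phi_succ m :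
  pstar m.+1 (Phi alpha m.+1) = pstar m (Phi alpha m) - alpha m *: ('X * Phi alpha m).
Proof.
by rewrite /= pstarB pstarZ pstar_mulX pstarK_mulX ?size_Phi ?conjCK.
Qed.

Lemma pstar_Phi0 : pstar 0 (Phi alpha 0) = 1.
Proof. by apply/polyP => -[|i]; rewrite coef_pstar coef1 //= rmorph1. Qed.

End Szego.

Lemma sum_coef_widen (R : nzRingType) (V : nmodType) (p : {poly R}) N (F : nat -> R -> V) :
  (size p <= N)%N -> (forall i, F i 0 = 0) ->
  \sum_(i < size p) F i p`_i = \sum_(i < N) F i p`_i.
Proof.
move=> size_p F0; rewrite (big_ord_widen _ (fun i => F i p`_i) size_p) big_mkcond.
by apply: eq_bigr => i _; case: ltnP => // /(nth_default 0) ->; rewrite F0.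
Qed.

Section InnerProduct.
Variables (C : numClosedFieldType) (c : int -> C).
Implicit Types (f g h : {poly C}).

Lemma lipXnl i g : lip c 'X^i g = \sum_(j < size g) (g`_j)^* * c (i%:Z - j%:Z).
Proof.
rewrite /lip size_polyXn big_ord_recr /= coefXn eqxx big1 ?add0r => [|j _].
  by apply: eq_bigr => j _; rewrite mul1r.
by rewrite coefXn ltn_eqF // big1 // => k _; rewrite !mul0r.
Qed.

Lemma lipXnr f j : lip c f 'X^j = \sum_(i < size f) f`_i * c (i%:Z - j%:Z).
Proof.
apply: eq_bigr => i _; rewrite size_polyXn big_ord_recr /= coefXn eqxx rmorph1 mulr1.
by rewrite big1 ?add0r // => k _; rewrite coefXn ltn_eqF // rmorph0 mulr0 mul0r.
Qed.

Lemma lip_XnXn i j : lip c 'X^i 'X^j = c (i%:Z - j%:Z).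
Proof.
rewrite lipXnr size_polyXn big_ord_recr /= coefXn eqxx mul1r big1 ?add0r //.
by move=> k _; rewrite coefXn ltn_eqF // mul0r.
Qed.

Lemma lip_suml f g N : (size f <= N)%N -> lip c f g = \sum_(i < N) f`_i * lip c 'X^i g.
Proof.
move=> size_f.
rewrite -(sum_coef_widen (F := fun i x => x * lip c 'X^i g) size_f) => [|i];
  last exact: mul0r.
by apply: eq_bigr => i _; rewrite lipXnl mulr_sumr; apply: eq_bigr => j _; rewrite mulrA.
Qed.

Lemma lip_sumr f g N : (size g <= N)%N -> lip c f g = \sum_(j < N) (g`_j)^* * lip c f 'X^j.
Proof.
move=> size_g.
rewrite -(sum_coef_widen (F := fun j x => x^* * lip c f 'X^j) size_g) => [|j];
  last by rewrite rmorph0 mul0r.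
rewrite [LHS]/lip exchange_big; apply: eq_bigr => j _; rewrite lipXnr mulr_sumr.
by apply: eq_bigr => i _; rewrite mulrCA mulrA.
Qed.

Lemma lipBl f g h : lip c (f - g) h = lip c f h - lip c g h.
Proof.
pose N := maxn (size f) (size g).
have size_fg : (size (f - g)%R <= N)%N by rewrite (leq_trans (size_polyD _ _)) ?size_polyN.
rewrite (lip_suml _ size_fg) (lip_suml _ (leq_maxl _ _ : (size f <= N)%N)).
rewrite (lip_suml _ (leq_maxr _ _ : (size g <= N)%N)) -sumrB.
by apply: eq_bigr => i _; rewrite coefB mulrBl.
Qed.

Lemma lipZl k f h : lip c (k *: f) h = k * lip c f h.
Proof.
rewrite (lip_suml _ (size_scale_leq k f)) (lip_suml _ (leqnn (size f))) mulr_sumr.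
by apply: eq_bigr => i _; rewrite coefZ mulrA.
Qed.

Lemma lip_mulX f j : lip c ('X * f) 'X^(j.+1) = lip c f 'X^j.
Proof.
have size_Xf : (size ('X * f)%R <= (size f).+1)%N.
  by rewrite (leq_trans (size_polyMleq _ _)) // size_polyX.
rewrite (lip_suml _ size_Xf) (lip_suml _ (leqnn _)) big_ord_recl coefXM mul0r add0r.
apply: eq_bigr => i _; rewrite coefXM !lip_XnXn /=; congr (_ * c _).
by rewrite /bump /=; lia.
Qed.

Lemma lip_pstar_Xn n f j : (size f <= n.+1)%N -> (j <= n)%N ->
  lip c (pstar n f) 'X^j = lip c 'X^(n - j) f.
Proof.
move=> size_f lejn; rewrite (lip_suml _ (size_poly _ _)) (lip_sumr _ size_f).
rewrite (reindex_inj rev_ord_inj); apply: eq_bigr => i _.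
have lein : (i <= n)%N := ltn_ord i.
rewrite coef_pstar ltn_ord /= subSS subKn // !lip_XnXn; congr (_ * c _).
lia.
Qed.

End InnerProduct.

Definition lip_series (C : numClosedFieldType) (c : int -> C) (f : {poly C}) : fps C :=
  fun n => lip c f 'X^n.

Section Orthogonality.
Variables (C : numClosedFieldType) (alpha : nat -> C) (c : int -> C).
Hypothesis c_OPUC : is_OPUC_functional alpha c.
Local Notation z := (fps_X C).
Local Notation U m := (lip_series c (Phi alpha m)).
Local Notation V m := (lip_series c (pstar m (Phi alpha m))).
Local Notation W m := (V m - fps_const (V m 0%N)).

Lemma lip_Phi_Xn m j : (j < m)%N -> lip c (Phi alpha m) 'X^j = 0.
Proof.
elim/ltn_ind: j => j IHj ltjm.
have /c_OPUC.2 : m <> j by move/eqP; rewrite gtn_eqF.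
rewrite (lip_sumr c _ (eq_leq (size_Phi _ _))) big_ord_recr /= coef_Phi_deg rmorph1 mul1r.
by rewrite big1 ?add0r // => i _; rewrite IHj ?mulr0 // (ltn_trans _ ltjm).
Qed.

Lemma lip_Xn_Phi m j : (j < m)%N -> lip c 'X^j (Phi alpha m) = 0.
Proof.
elim/ltn_ind: j => j IHj ltjm.
have /c_OPUC.2 : j <> m by move/eqP; rewrite ltn_eqF.
rewrite (lip_suml c _ (eq_leq (size_Phi _ _))) big_ord_recr /= coef_Phi_deg mul1r.
by rewrite big1 ?add0r // => i _; rewrite IHj ?mulr0 // (ltn_trans _ ltjm).
Qed.

Lemma lip_Phi_Phi m : lip c (Phi alpha m) (Phi alpha m) = lip c (Phi alpha m) 'X^m.
Proof.
rewrite (lip_sumr c _ (eq_leq (size_Phi _ _))) big_ord_recr /= coef_Phi_deg rmorph1 mul1r.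
by rewrite big1 ?add0r // => i _; rewrite lip_Phi_Xn ?mulr0.
Qed.

Lemma lip_series_Phi_vanishes m : vanishes_below (U m) m.
Proof. exact: lip_Phi_Xn. Qed.

Lemma lip_series_pstar_vanishes m : vanishes_below (W m) m.
Proof.
move=> [|i] ltim; first by rewrite coef_fpsB subrr.
rewrite coef_fpsB subr0 /lip_series lip_pstar_Xn ?size_Phi //; last exact: ltnW.
by rewrite lip_Xn_Phi // ltn_subrL (leq_ltn_trans (leq0n _) ltim).
Qed.

Lemma lip_series_Phi_succ m : U m.+1 = z * U m - fps_const (alpha m)^* * W m.
Proof.
apply/funext => -[|n]; rewrite coef_fpsB coef_fpsXM coef_fps_constM coef_fpsB.
  by rewrite /lip_series lip_Phi_Xn // subrr mulr0 subr0.
by rewrite subr0 /lip_series /= lipBl lipZl lip_mulX.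
Qed.

Lemma lip_series_pstar_succ m : W m.+1 = W m - fps_const (alpha m) * z * U m.
Proof.
apply/funext => -[|n]; rewrite !coef_fpsB -mulrA coef_fps_constM coef_fpsXM.
  by rewrite !subrr mulr0 subr0.
by rewrite !subr0 /lip_series pstar_Phi_succ lipBl lipZl lip_mulX.
Qed.

Lemma lip_series_pstar0 : W 0%N = U 0%N - 1.
Proof.
have V00 : lip_series c 1 0%N = 1.
  by rewrite /lip_series -(expr0 'X) lip_XnXn subrr c_OPUC.1.
by rewrite pstar_Phi0 V00.
Qed.

Lemma mu_lip_series n m : mu alpha c n m = U m n / U m m.
Proof. by rewrite /mu lip_Phi_Phi. Qed.

End Orthogonality.

Theorem proposition4p1 (R : realType) (a : R[i]) (c : int -> R[i]) (m : nat)
  (S : fps R[i]) :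
  0 < `|a| < 1 ->
  is_OPUC_functional (fun _ => a) c ->
  (* S = sqrt(1 - 2z + 4|a|^2 z + z^2), the formal power series with constant term 1 *)
  S 0%N = 1 ->
  fps_mul S S =
    (fun n => match n with
              | 0 => 1
              | 1 => -2 + 4 * `|a| ^+ 2
              | 2 => 1
              | _ => 0 end) ->
  (* (sum_n mu_{n,m} z^n) * D1 * D2^m = 2|a|^2 (2z)^m, where
     D1 = 2|a|^2 + a - a z - a S  and  D2 = 1 + z + S;
     both D1 and D2 have nonzero constant term, so this is the stated quotient. *)
  fps_mul
    (fps_mul (fun n => mu (fun _ => a) c n m)
       (fps_add (fps_const (2 * `|a| ^+ 2 + a))
          (fps_add (fps_scale (- a) (@fps_X R[i])) (fps_scale (- a) S))))
    (fps_exp (fps_add (fps_const 1) (fps_add (@fps_X R[i]) S)) m)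
  = fps_scale (2 * `|a| ^+ 2) (fps_exp (fps_scale 2 (@fps_X R[i])) m).
Proof.
move=> /andP[a_gt0 a_lt1] c_OPUC S0 S2.
rewrite normCK in S2 *.
have SS : S * S = 1 + fps_const (-2 + 4 * (a * a^*)) * fps_X _ + fps_X _ * fps_X _.
  by apply/funext => n; rewrite coef_fps_quadratic -fps_mulE S2; case: n => [|[|[|n]]].
have aa_neq0 : a * a^* != 0 by rewrite mul_conjC_eq0 -normr_gt0.
have rho_neq0 : 1 - a * a^* != 0.
  by rewrite subr_eq0 -normCK gt_eqF // expr_lt1 ?normr_ge0.
pose U k := lip_series c (Phi (fun _ => a) k).
pose V k := lip_series c (pstar k (Phi (fun _ => a) k)).
have mu_series : (fun n => mu (fun _ => a) c n m) = fps_const (U m m)^-1 * U m.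
  by apply/funext => n; rewrite coef_fps_constM (mu_lip_series c_OPUC) mulrC.
rewrite !fps_mulE !fps_addE !fps_expE !fps_scaleE mu_series.
exact: (U_normalized_closed_form (U := U) (W := fun k => V k - fps_const (V k 0%N))
  S0 SS (lip_series_Phi_succ c_OPUC) (lip_series_pstar_succ _ c)
  (lip_series_Phi_vanishes c_OPUC) (lip_series_pstar_vanishes c_OPUC) (lip_series_pstar0 c_OPUC)).
Qed.
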